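(* Let $\hat U_1$ and $\hat U_2$ be real balanced four-splitters with four-splitter matrices $\mathbf R_1$ and $\mathbf R_2$, respectively. Then $\mathbf R_1$ can be transformed into $\mathbf R_2$ by some sequence of row permutations, row negations, and negation of any single column. (Equivalently: let $\mathbf R_1,\mathbf R_2\in\mathrm{O}(4)$ be real orthogonal $4\times 4$ matrices all of whose entries have absolute value $\tfrac12$; then for any fixed column index $c\in\{1,2,3,4\}$, $\mathbf R_2$ can be obtained from $\mathbf R_1$ by a finite sequence of operations each of which is a permutation of the rows, a negation of one row, or a negation of column $c$.)
   Context: For $N$ bosonic modes with annihilation operators $\hat{\mathbf a}=(\hat a_1,\dots,\hat a_N)^T$, a passive linear-optical unitary $\hat U$ is associated with the matrix $\mathbf U\in\mathrm U(N)$ defined by $\hat U^\dagger \hat{\mathbf a}\hat U=\mathbf U\hat{\mathbf a}$. $\hat U$ is a balanced $n$-splitter ($n=N$) if all entries of $\mathbf U$ have the same magnitude; $\mathbf U$ is its $n$-splitter matrix. It is a real balanced $n$-splitter if $\mathbf U\in\mathrm O(n)$ (all entries real). For $n=4$, all entries of a real balanced four-splitter matrix are therefore $\pm\tfrac12$. *)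

From mathcomp Require Import all_boot all_order all_algebra all_fingroup.
From Stdlib Require Import Relations.
Set Implicit Arguments. Unset Strict Implicit. Unset Printing Implicit Defensive.
Import Order.TTheory GRing.Theory Num.Theory.
Local Open Scope ring_scope.

Definition orthogonal_mx (R : realFieldType) (n : nat) (M : 'M[R]_n) : Prop :=
  M *m M^T = 1%:M.

Definition real_balanced_splitter (R : realFieldType) (n : nat) (M : 'M[R]_n) : Prop :=
  orthogonal_mx M /\ forall i j k l, `|M i j| = `|M k l|.

Definition neg_row (R : realFieldType) (n : nat) (i : 'I_n) (A : 'M[R]_n) : 'M[R]_n :=
  \matrix_(k, j) (if k == i then - A k j else A k j).

Definition neg_col (R : realFieldType) (n : nat) (c : 'I_n) (A : 'M[R]_n) : 'M[R]_n :=
  \matrix_(k, j) (if j == c then - A k j else A k j).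

Definition allowed_step (R : realFieldType) (n : nat) (c : 'I_n) (A B : 'M[R]_n) : Prop :=
  (exists s : 'S_n, B = row_perm s A)
  \/ (exists i : 'I_n, B = neg_row i A)
  \/ B = neg_col c A.

Definition reachable (R : realFieldType) (n : nat) (c : 'I_n) : relation 'M[R]_n :=
  clos_refl_trans _ (@allowed_step R n c).

From mathcomp Require Import all_boot all_order all_algebra all_fingroup.
From Stdlib Require Import Relations.
From mathcomp Require Import ring.
Set Implicit Arguments. Unset Strict Implicit. Unset Printing Implicit Defensive.

(* The entries of a real balanced four-splitter are +-1/2.  For two distinct
   rows u and v the four products u_k v_k are +-1/4 and sum to zero, which
   forces prod u = prod v: all rows have the same product.  Negating column c
   if necessary makes this product positive, and negating the rows with a
   negative entry in column c then gives a normal form.  A row in normal form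
   is determined by its signs at two columns other than c, the sign at the
   remaining column being forced by the product, so there are at most four
   such rows.  The four distinct rows of a normalized splitter therefore
   exhaust them, and two normalized splitters differ by a row permutation.
   As every operation is invertible, this connects any two splitters. *)

Import Order.TTheory GRing.Theory Num.Theory.
Local Open Scope ring_scope.

Section BalancedSplitters.
Variables (R : realFieldType) (n : nat) (c : 'I_n).
Implicit Types (A B M : 'M[R]_n).

Lemma orthogonal_mxP M :
  orthogonal_mx M <-> forall i j, \sum_k M i k * M j k = (i == j)%:R.
Proof.
have dotE i j : (M *m M^T) i j = \sum_k M i k * M j k.
  by rewrite mxE; apply: eq_bigr => k _; rewrite mxE.
split=> [/matrixP orthM i j | dotM]; first by rewrite -dotE orthM mxE.
by apply/matrixP => i j; rewrite dotE dotM mxE.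
Qed.

Lemma orthogonal_mx_row_inj M : orthogonal_mx M -> injective (fun i => row i M).
Proof.
move/orthogonal_mxP=> dotM i j /rowP eq_ij; apply/eqP.
have eqM k : M i k = M j k by have := eq_ij k; rewrite !mxE.
have := dotM i j; under eq_bigr do rewrite eqM.
by rewrite dotM eqxx; case: eqP => // _ /eqP; rewrite oner_eq0.
Qed.

Lemma balanced_splitter_sqr M i j :
  real_balanced_splitter M -> M i j ^+ 2 = n%:R^-1.
Proof.
case=> /orthogonal_mxP dotM eq_norm.
have sqrE k : M i k * M i k = M i j ^+ 2.
  by rewrite -expr2 -real_normK ?num_real // (eq_norm i k i j) real_normK ?num_real.
have n_neq0 : n%:R != 0 :> R.
  by rewrite pnatr_eq0 -lt0n (leq_ltn_trans (leq0n i) (ltn_ord i)).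
have := dotM i i; rewrite eqxx (eq_bigr _ (fun k _ => sqrE k)) sumr_const card_ord.
by move=> sum_sqr; apply: (mulIf n_neq0); rewrite mulVf // mulr_natr sum_sqr.
Qed.

Lemma balanced_splitter_neq0 M i j : real_balanced_splitter M -> M i j != 0.
Proof.
move=> balM; rewrite -sqrf_eq0 (balanced_splitter_sqr i j balM) invr_eq0.
by rewrite pnatr_eq0 -lt0n (leq_ltn_trans (leq0n i) (ltn_ord i)).
Qed.

Lemma allowed_step_balanced A B : allowed_step c A B ->
  real_balanced_splitter A -> real_balanced_splitter B.
Proof.
move=> stepAB [/orthogonal_mxP dotA normA].
have normB i j : exists i', `|B i j| = `|A i' j|.
  case: stepAB => [[s ->]|[[r ->]|->]]; first by exists (s i); rewrite mxE.
    by exists i; rewrite mxE; case: (i == r); rewrite ?normrN.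
  by exists i; rewrite mxE; case: (j == c); rewrite ?normrN.
split=> [|i j k l]; last first.
  by have [i' ->] := normB i j; have [k' ->] := normB k l; apply: normA.
apply/orthogonal_mxP => i j.
case: stepAB => [[s ->]|[[r ->]|->]].
- under eq_bigr do rewrite !mxE.
  by rewrite dotA (inj_eq perm_inj).
- have negE k l : neg_row r A k l = (-1) ^+ (k == r) * A k l.
    by rewrite mxE; case: (k == r); rewrite ?mulN1r ?mul1r.
  under eq_bigr do rewrite !negE mulrACA.
  rewrite -mulr_sumr dotA; have [<-|_] := eqVneq i j; last by rewrite mulr0.
  by rewrite mulr1 -expr2 sqrr_sign.
- rewrite -dotA; apply: eq_bigr => k _; rewrite !mxE.
  by case: (k == c); rewrite ?mulrNN.
Qed.

Lemma reachable_balanced A B : reachable c A B ->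
  real_balanced_splitter A -> real_balanced_splitter B.
Proof.
elim=> [{}A {}B /allowed_step_balanced // | // | {}A M {}B _ IH1 _ IH2].
by move=> /IH1 /IH2.
Qed.

Lemma allowed_step_sym A B : allowed_step c A B -> allowed_step c B A.
Proof.
case=> [[s ->]|[[i ->]| ->]].
- by left; exists s^-1%g; apply/matrixP => i j; rewrite !mxE permKV.
- right; left; exists i; apply/matrixP => k j; rewrite !mxE.
  by case: (k == i); rewrite ?opprK.
- right; right; apply/matrixP => k j; rewrite !mxE.
  by case: (j == c); rewrite ?opprK.
Qed.

Lemma reachable_sym A B : reachable c A B -> reachable c B A.
Proof.
elim=> [{}A {}B /allowed_step_sym | | {}A M {}B _ IH1 _ IH2].
- exact: rt_step.
- exact: rt_refl.
- exact: rt_trans IH2 IH1.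
Qed.

Lemma reachable_neg_rows A (P : pred 'I_n) :
  reachable c A (\matrix_(i, j) ((-1) ^+ P i * A i j)).
Proof.
have foldE s :
    foldr (@neg_row R n) A s = \matrix_(i, j) ((-1) ^+ count_mem i s * A i j).
  elim: s => [|r s IHs]; apply/matrixP => i j; first by rewrite mxE mul1r.
  rewrite /= !mxE IHs mxE eq_sym.
  by case: (r == i); rewrite ?exprS ?mulN1r ?mulNr.
have reach_fold s : reachable c A (foldr (@neg_row R n) A s).
  elim: s => [|r s' IHs]; first exact: rt_refl.
  by apply: rt_trans IHs _; apply: rt_step; right; left; exists r.
suff -> : \matrix_(i, j) ((-1) ^+ P i * A i j) = foldr (@neg_row R n) A (enum P).
  exact: reach_fold.
rewrite foldE; apply/matrixP => i j; rewrite !mxE.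
by rewrite count_uniq_mem ?enum_uniq // mem_enum.
Qed.

Lemma prod_neg_col A i : \prod_k neg_col c A i k = - \prod_k A i k.
Proof.
rewrite (bigD1 c) //= [in RHS](bigD1 c) //= mxE eqxx mulNr; congr (- (_ * _)).
by apply: eq_bigr => k /negbTE neq_kc; rewrite mxE neq_kc.
Qed.

Lemma row_perm_of_rows A B : injective (fun i => row i B) ->
  (forall i, exists j, row i B = row j A) -> exists s : 'S_n, B = row_perm s A.
Proof.
move=> injB /fin_all_exists[f rowBf].
have injf : injective f by move=> i j eq_f; apply: injB; rewrite !rowBf eq_f.
exists (perm injf); apply/matrixP => i j.
by have := congr1 (fun v : 'rV[R]_n => v 0 j) (rowBf i); rewrite !mxE permE.
Qed.

Lemma eq_of_sign_prod (u v : 'I_n -> R) d :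
  (forall k, u k ^+ 2 = v k ^+ 2) -> (forall k, u k != 0) ->
  (forall k, k != d -> (0 < u k) = (0 < v k)) ->
  0 < \prod_k u k -> 0 < \prod_k v k -> u =1 v.
Proof.
move=> sqr_uv u_neq0 sign_uv prod_u prod_v.
have eq_or_opp k : u k = v k \/ u k = - v k.
  by have /eqP := sqr_uv k; rewrite eqf_sqr => /orP[] /eqP; [left | right].
have eq_off k : k != d -> u k = v k.
  move=> neq_kd; case: (eq_or_opp k) => // uNv.
  by move: (u_neq0 k) (sign_uv k neq_kd); rewrite uNv oppr_eq0 oppr_gt0; case: ltrgt0P.
move=> k; have [->|/eq_off //] := eqVneq k d.
case: (eq_or_opp d) => // uNv.
have prod_uNv : \prod_k u k = - \prod_k v k.
  rewrite (bigD1 d) //= [in RHS](bigD1 d) //= uNv mulNr; congr (- (_ * _)).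
  by apply: eq_bigr => l /eq_off.
by move: prod_u; rewrite prod_uNv oppr_gt0 ltNge (ltW prod_v).
Qed.

End BalancedSplitters.

Section FourSplitters.
Variable R : realFieldType.
Implicit Types (M N : 'M[R]_4).

Lemma prod4_of_sum_eq0 (x0 x1 x2 x3 b : R) :
  x0 ^+ 2 = b -> x1 ^+ 2 = b -> x2 ^+ 2 = b -> x3 ^+ 2 = b ->
  x0 + (x1 + (x2 + x3)) = 0 -> x0 * (x1 * (x2 * x3)) = b ^+ 2.
Proof.
move=> sq0 sq1 sq2 sq3 sum0.
(* (x0 + x1)^2 = (x2 + x3)^2 forces x0 x1 = x2 x3. *)
have : (x0 * x1 - x2 * x3) *+ 2
    = (x0 + (x1 + (x2 + x3))) * (x0 + x1 - x2 - x3)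
      - (x0 ^+ 2 - x2 ^+ 2) - (x1 ^+ 2 - x3 ^+ 2) by ring.
rewrite sum0 sq0 sq1 sq2 sq3 mul0r !subrr ?subr0 => /eqP.
rewrite mulrn_eq0 /= subr_eq0 => /eqP x01E.
by rewrite mulrA -x01E -expr2 exprMn sq0 sq1 expr2.
Qed.

Lemma balanced_splitter4_row_prod M i j : real_balanced_splitter M ->
  \prod_k M i k = \prod_k M j k.
Proof.
move=> balM; have [<- //|neq_ij] := eqVneq i j.
have sqrM i j : M i j ^+ 2 = 4^-1 := balanced_splitter_sqr i j balM.
have prod_sqr : (\prod_k M i k) ^+ 2 = (4^-1 ^+ 2) ^+ 2.
  by rewrite -prodrXl (eq_bigr _ (fun k _ => sqrM i k)) prodr_const card_ord -exprM.
have prod_mul : \prod_k M i k * \prod_k M j k = (4^-1 ^+ 2) ^+ 2.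
  rewrite -big_split /= !big_ord_recl big_ord0 mulr1.
  apply: prod4_of_sum_eq0; rewrite ?exprMn ?sqrM //.
  have /orthogonal_mxP dotM := balM.1.
  by have := dotM i j; rewrite (negbTE neq_ij) !big_ord_recl big_ord0 addr0.
have prod_neq0 : \prod_k M i k != 0.
  by rewrite -sqrf_eq0 prod_sqr !expf_eq0 /= invr_eq0 pnatr_eq0.
by apply: (mulfI prod_neq0); rewrite prod_mul -prod_sqr expr2.
Qed.

Definition normalized (c : 'I_4) N :=
  (forall i, 0 < N i c) /\ (forall i, 0 < \prod_k N i k).

Lemma normalize_splitter4 M c : real_balanced_splitter M ->
  exists2 N, reachable c M N & normalized c N.
Proof.
move=> balM; set p := \prod_k M ord0 k.
pose A := if 0 < p then M else neg_col c M.
have reachMA : reachable c M A.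
  by rewrite /A; case: ifP => _; [apply: rt_refl | apply: rt_step; right; right].
have balA := reachable_balanced reachMA balM.
have prodA_gt0 i : 0 < \prod_k A i k.
  have p_neq0 : p != 0.
    by apply/prodf_neq0 => k _; apply: balanced_splitter_neq0.
  have prodM : \prod_k M i k = p := balanced_splitter4_row_prod i ord0 balM.
  rewrite /A; case: (ltrgt0P p) p_neq0 => // [p_gt0 | p_lt0] _.
    by rewrite prodM.
  by rewrite prod_neg_col prodM oppr_gt0.
exists (\matrix_(i, j) ((-1) ^+ (A i c < 0)%R * A i j)).
  exact: rt_trans reachMA (reachable_neg_rows _ _ (fun i => A i c < 0)).
split=> i; first by rewrite mxE -normrEsign normr_gt0 balanced_splitter_neq0.
under eq_bigr do rewrite mxE.
by rewrite prodrMl card_ord -exprM -signr_odd oddM andbF mul1r.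
Qed.

Lemma ord4_cover (c : 'I_4) :
  exists d1 d2 d3 : 'I_4, forall k, k != d3 -> [|| k == c, k == d1 | k == d2].
Proof.
pose o (m : nat) (lt_m4 : (m < 4)%N) := Ordinal lt_m4.
case: c => [[|[|[|[|//]]]] ?];
  [exists (o 1 isT), (o 2 isT), (o 3 isT) | exists (o 0 isT), (o 2 isT), (o 3 isT)
  |exists (o 0 isT), (o 1 isT), (o 3 isT) | exists (o 0 isT), (o 1 isT), (o 2 isT)];
  by case=> [[|[|[|[|//]]]] ?].
Qed.

Lemma normalized_row_eq c d1 d2 d3 N N' i j :
  (forall k, k != d3 -> [|| k == c, k == d1 | k == d2]) ->
  real_balanced_splitter N -> real_balanced_splitter N' ->
  normalized c N -> normalized c N' ->
  (0 < N i d1, 0 < N i d2) = (0 < N' j d1, 0 < N' j d2) -> row i N = row j N'.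
Proof.
move=> cover balN balN' [Nc Nprod] [N'c N'prod] [sign1 sign2].
apply/rowP => k; rewrite !mxE; move: k.
apply: (@eq_of_sign_prod _ _ _ _ d3) => // [k | k | k /cover].
- by rewrite !balanced_splitter_sqr.
- exact: balanced_splitter_neq0.
- by case/or3P=> /eqP->; rewrite ?Nc ?N'c.
Qed.

Lemma normalized_splitter4_row_perm c N1 N2 :
  real_balanced_splitter N1 -> real_balanced_splitter N2 ->
  normalized c N1 -> normalized c N2 -> exists s : 'S_4, N2 = row_perm s N1.
Proof.
move=> bal1 bal2 norm1 norm2.
have [d1 [d2 [d3 cover]]] := ord4_cover c.
pose signs N i := (0 < N i d1, 0 < N i d2).
have signs1_inj : injective (signs N1).
  move=> i j /(normalized_row_eq cover bal1 bal1 norm1 norm1).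
  exact: (orthogonal_mx_row_inj bal1.1).
apply: row_perm_of_rows (orthogonal_mx_row_inj bal2.1) _ => i.
have /codomP[j signsE] : signs N2 i \in codom (signs N1).
  by apply: (inj_card_onto signs1_inj); rewrite card_prod card_bool card_ord.
by exists j; apply: normalized_row_eq cover bal2 bal1 norm2 norm1 _.
Qed.

End FourSplitters.

Theorem theorem1 (R : realFieldType) (R1 R2 : 'M[R]_4) (c : 'I_4) :
  real_balanced_splitter R1 -> real_balanced_splitter R2 ->
  reachable c R1 R2.
Proof.
move=> bal1 bal2.
have [N1 reach1 norm1] := normalize_splitter4 c bal1.
have [N2 reach2 norm2] := normalize_splitter4 c bal2.
have [s N2E] := normalized_splitter4_row_perm (reachable_balanced reach1 bal1)
  (reachable_balanced reach2 bal2) norm1 norm2.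
apply: rt_trans reach1 _; apply: rt_trans _ (reachable_sym reach2).
apply: rt_step; left; exact: ex_intro _ s N2E.
Qed.
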